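(* Let $U$ be a finite nonempty set, let $(T,I,N)$ be an IMTL triplet, let $\widetilde{R}$ be a $T$-preorder relation on $U$, and let $A$ be a fuzzy set on $U$. Then $A$ is granularly representable with respect to $\widetilde{R}$ if and only if for all $u,v\in U$ the granules $\widetilde{R}^+_{A(u)}(u)$ and $\widetilde{R}^-_{N(A(v))}(v)$ are $T$-disjoint.
   Context: A residual triplet $(T,I,N)$ consists of a left-continuous $t$-norm $T$, its residual implicator $I(x,y)=\sup\{\beta\in[0,1]: T(x,\beta)\le y\}$, and the induced negator $N(x)=I(x,0)$; it is an IMTL triplet if $N$ is involutive ($N(N(x))=x$ for all $x$). A fuzzy set on $U$ is a map $U\to[0,1]$; its complement is $coA(u)=N(A(u))$. A fuzzy relation $\widetilde{R}:U\times U\to[0,1]$ is a $T$-preorder if it is reflexive and $T$-transitive ($T(\widetilde{R}(u,v),\widetilde{R}(v,w))\le\widetilde{R}(u,w)$). Granules: $\widetilde{R}^+_\lambda(u)$ is the fuzzy set $w\mapsto T(\widetilde{R}(w,u),\lambda)$ and $\widetilde{R}^-_\lambda(u)$ is the fuzzy set $w\mapsto T(\widetilde{R}(u,w),\lambda)$. Two fuzzy sets $B,C$ are $T$-disjoint if $T(B(w),C(w))=0$ for all $w\in U$. A fuzzy set $A$ is granularly representable w.r.t. $\widetilde{R}$ if $T(\widetilde{R}(v,u),A(u))\le A(v)$ for all $u,v\in U$ (equivalently, $A(v)=\max_{u\in U}T(\widetilde{R}(v,u),A(u))$ for all $v$). *)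

From HB Require Import structures.
From mathcomp Require Import all_boot all_order all_algebra.
From mathcomp Require Import boolp classical_sets reals.
Set Implicit Arguments. Unset Strict Implicit. Unset Printing Implicit Defensive.
Import Order.TTheory GRing.Theory Num.Theory.
Local Open Scope ring_scope.
Local Open Scope classical_set_scope.

Section Fuzzy.
Variable R : realType.

Definition in01 (x : R) : Prop := 0 <= x <= 1.

Definition is_tnorm (T : R -> R -> R) : Prop :=
  [/\ (forall x y, in01 x -> in01 y -> in01 (T x y)),
      (forall x y, in01 x -> in01 y -> T x y = T y x),
      (forall x y z, in01 x -> in01 y -> in01 z -> T x (T y z) = T (T x y) z),
      (forall x x' y, in01 x -> in01 x' -> in01 y -> x <= x' -> T x y <= T x' y)
    & (forall x, in01 x -> T x 1 = x)].

(* left-continuity in the first argument (equivalently in both, by commutativity) *)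
Definition left_continuous (T : R -> R -> R) : Prop :=
  forall x y, in01 x -> in01 y -> 0 < x ->
  forall e : R, 0 < e -> exists2 d : R, 0 < d &
    forall z, in01 z -> x - d < z -> z <= x -> T x y - e < T z y.

Definition residual (T : R -> R -> R) (x y : R) : R :=
  sup [set b | in01 b /\ T x b <= y].

Definition negator (T : R -> R -> R) (x : R) : R := residual T x 0.

Definition IMTL_tnorm (T : R -> R -> R) : Prop :=
  [/\ is_tnorm T, left_continuous T
    & forall x, in01 x -> negator T (negator T x) = x].

Variable U : finType.

Definition fuzzy_set (A : U -> R) : Prop := forall u, in01 (A u).
Definition fuzzy_rel (Rl : U -> U -> R) : Prop := forall u v, in01 (Rl u v).

Definition T_preorder (T : R -> R -> R) (Rl : U -> U -> R) : Prop :=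
  (forall u, Rl u u = 1) /\
  (forall u v w, T (Rl u v) (Rl v w) <= Rl u w).

Definition granule_plus (T : R -> R -> R) (Rl : U -> U -> R) (lam : R) (u : U)
  : U -> R := fun w => T (Rl w u) lam.
Definition granule_minus (T : R -> R -> R) (Rl : U -> U -> R) (lam : R) (u : U)
  : U -> R := fun w => T (Rl u w) lam.

Definition T_disjoint (T : R -> R -> R) (B C : U -> R) : Prop :=
  forall w, T (B w) (C w) = 0.

Definition gran_repr (T : R -> R -> R) (Rl : U -> U -> R) (A : U -> R) : Prop :=
  forall u v, T (Rl v u) (A u) <= A v.

End Fuzzy.

(* By residuation, T c b = 0 iff b <= N c; for an involutive, hence antitone
   and order-reflecting, negator this gives T c (N a) = 0 iff c <= a.
   Reassociating the T-intersection of the two granules at w therefore turns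
   their disjointness into T (T (R v w) (R w u)) (A u) <= A v, which follows
   from granular representability by T-transitivity, and conversely gives it
   back for w = u by reflexivity. *)
From HB Require Import structures.
From mathcomp Require Import all_boot all_order all_algebra.
From mathcomp Require Import boolp classical_sets reals.
Set Implicit Arguments. Unset Strict Implicit.
Import Order.TTheory GRing.Theory Num.Theory.
Local Open Scope ring_scope.

Section Tnorm.
Variables (R : realType) (T : R -> R -> R).
Hypothesis hT : is_tnorm T.

Lemma in01_0 : in01 (0 : R). Proof. by rewrite /in01 lexx ler01. Qed.
Lemma in01_1 : in01 (1 : R). Proof. by rewrite /in01 lexx ler01. Qed.

Lemma tnorm_in01 x y : in01 x -> in01 y -> in01 (T x y).
Proof. by case: hT => h _ _ _ _; apply: h. Qed.

Lemma tnormC x y : in01 x -> in01 y -> T x y = T y x.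
Proof. by case: hT => _ h _ _ _; apply: h. Qed.

Lemma tnormA x y z : in01 x -> in01 y -> in01 z -> T x (T y z) = T (T x y) z.
Proof. by case: hT => _ _ h _ _; apply: h. Qed.

Lemma tnorm_monol x x' y :
  in01 x -> in01 x' -> in01 y -> x <= x' -> T x y <= T x' y.
Proof. by case: hT => _ _ _ h _; apply: h. Qed.

Lemma tnorm_monor x y y' :
  in01 x -> in01 y -> in01 y' -> y <= y' -> T x y <= T x y'.
Proof.
by move=> hx hy hy' le_yy'; rewrite !(tnormC hx) //; apply: tnorm_monol.
Qed.

Lemma tnormx1 x : in01 x -> T x 1 = x.
Proof. by case: hT => _ _ _ _ h; apply: h. Qed.

Lemma tnormx0 x : in01 x -> T x 0 = 0.
Proof.
move=> hx; have /andP[T_ge0 _] := tnorm_in01 hx in01_0.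
apply/eqP; rewrite eq_le T_ge0 andbT (tnormC hx in01_0) -[leRHS](tnormx1 in01_0).
by apply: (tnorm_monor in01_0 hx in01_1); case/andP: hx.
Qed.

Lemma tnorm_eq0 x y : in01 x -> in01 y -> (T x y = 0 <-> T x y <= 0).
Proof.
move=> hx hy; split=> [-> // | le0].
by apply/eqP; rewrite eq_le le0; case/andP: (tnorm_in01 hx hy).
Qed.

Lemma has_sup_residual x y :
  in01 x -> in01 y -> has_sup [set b | in01 b /\ T x b <= y].
Proof.
move=> hx /andP[y_ge0 _]; split; last by exists 1 => b [/andP[_ ->] _].
by exists 0; split; [exact: in01_0 | rewrite tnormx0].
Qed.

Lemma residual_in01 x y : in01 x -> in01 y -> in01 (residual T x y).
Proof.
move=> hx hy; have hs := has_sup_residual hx hy; apply/andP; split.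
  apply: (sup_upper_bound hs); split; first exact: in01_0.
  by rewrite tnormx0 //; case/andP: hy.
by apply: ge_sup; [case: hs | move=> b [/andP[_ ->] _]].
Qed.

Hypothesis hlc : left_continuous T.

(* Left continuity makes the supremum defining the residual a maximum. *)
Lemma tnorm_residual_le x y : in01 x -> in01 y -> T x (residual T x y) <= y.
Proof.
move=> hx hy; set s := residual T x y.
have hs := has_sup_residual hx hy; have s01 : in01 s := residual_in01 hx hy.
rewrite (tnormC hx s01) leNgt; apply/negP => lt_y_Tsx.
have [s0 | s_neq0] := eqVneq s 0.
  move: lt_y_Tsx; rewrite s0 (tnormC in01_0 hx) tnormx0 // ltNge.
  by case/andP: hy => ->.
have s_gt0 : 0 < s by rewrite lt0r s_neq0; case/andP: s01.
have gap_gt0 : 0 < T s x - y by rewrite subr_gt0.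
have [d d_gt0 near_s] := hlc s01 hx s_gt0 gap_gt0.
have [b [b01 Txb_le] lt_b] := sup_adherent d_gt0 hs.
have := near_s b b01 lt_b (sup_upper_bound hs (conj b01 Txb_le)).
by rewrite opprB addrCA subrr addr0 (tnormC b01 hx) ltNge Txb_le.
Qed.

Lemma residualP x b y : in01 x -> in01 b -> in01 y ->
  (T x b <= y <-> b <= residual T x y).
Proof.
move=> hx hb hy; split=> [le_Txb | le_b].
  exact: (sup_upper_bound (has_sup_residual hx hy)).
apply: le_trans (tnorm_residual_le hx hy).
exact: tnorm_monor hx hb (residual_in01 hx hy) le_b.
Qed.

Lemma negator_in01 x : in01 x -> in01 (negator T x).
Proof. by move=> hx; apply: residual_in01 hx in01_0. Qed.

Lemma tnorm_negatorP c b : in01 c -> in01 b ->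
  (T c b = 0 <-> b <= negator T c).
Proof.
by move=> hc hb; rewrite tnorm_eq0 //; apply: residualP hc hb in01_0.
Qed.

Lemma negator_anti a b : in01 a -> in01 b -> a <= b -> negator T b <= negator T a.
Proof.
move=> ha hb le_ab; have Nb01 := negator_in01 hb.
apply/(tnorm_negatorP ha Nb01)/tnorm_eq0 => //.
rewrite -(proj2 (tnorm_negatorP hb Nb01) (lexx _)).
exact: tnorm_monol.
Qed.

Hypothesis hinv : forall x, in01 x -> negator T (negator T x) = x.

Lemma tnorm_negator_eq0 c a : in01 c -> in01 a -> (T c (negator T a) = 0 <-> c <= a).
Proof.
move=> hc ha; have Na01 := negator_in01 ha.
apply: iff_trans (tnorm_negatorP hc Na01) _; split=> [le_N | le_ca].
  by rewrite -(hinv hc) -(hinv ha); apply: negator_anti => //; apply: negator_in01.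
exact: negator_anti.
Qed.

Variables (U : finType) (Rl : U -> U -> R) (A : U -> R).
Hypotheses (hR : fuzzy_rel Rl) (hA : fuzzy_set A).

Lemma T_disjoint_granulesP u v :
  T_disjoint T (granule_plus T Rl (A u) u) (granule_minus T Rl (negator T (A v)) v)
  <-> forall w, T (T (Rl v w) (Rl w u)) (A u) <= A v.
Proof.
have NAv01 := negator_in01 (hA v).
have regroup w : T (T (Rl w u) (A u)) (T (Rl v w) (negator T (A v)))
                 = T (T (T (Rl v w) (Rl w u)) (A u)) (negator T (A v)).
  have [Rwu01 Rvw01] := (hR w u, hR v w).
  have Rwu_Au01 := tnorm_in01 Rwu01 (hA u).
  rewrite tnormA // (tnormC Rwu_Au01 Rvw01) tnormA //.
have lhs01 w : in01 (T (T (Rl v w) (Rl w u)) (A u)).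
  exact: tnorm_in01 (tnorm_in01 (hR v w) (hR w u)) (hA u).
split=> [disj w | le_w w].
  by apply/(tnorm_negator_eq0 (lhs01 w) (hA v)); rewrite -regroup; apply: disj.
by rewrite /granule_plus /granule_minus regroup; apply/tnorm_negator_eq0.
Qed.

End Tnorm.

Theorem proposition4 (R : realType) (U : finType) (hU : (0 < #|U|)%N)
  (T : R -> R -> R) (Rl : U -> U -> R) (A : U -> R) :
  IMTL_tnorm T -> fuzzy_rel Rl -> T_preorder T Rl -> fuzzy_set A ->
  (gran_repr T Rl A <->
   forall u v : U,
     T_disjoint T (granule_plus T Rl (A u) u)
                  (granule_minus T Rl (negator T (A v)) v)).
Proof.
case=> hT hlc hinv hR [refl trans] hA.
split=> [repr u v | disj u v].
- apply/(T_disjoint_granulesP hT hlc hinv hR hA) => w.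
  apply: le_trans (repr u v).
  by apply: tnorm_monol (trans v w u) => //; apply: tnorm_in01.
- have := proj1 (T_disjoint_granulesP hT hlc hinv hR hA u v) (disj u v) u.
  by rewrite refl tnormx1.
Qed.
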